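(* Let $\mathfrak{K}=(\{a,b\},R,E)$ be the $\mathsf{MS4}$-frame with $R[a]=\{a,b\}$, $R[b]=\{b\}$, $E[a]=E[b]=\{a,b\}$, and let $\mathfrak{H}=(\{a,b,c\},R,E)$ be the $\mathsf{MS4}$-frame with $R[a]=\{a,b,c\}$, $R[b]=R[c]=\{b,c\}$, $E[a]=E[b]=\{a,b\}$, $E[c]=\{c\}$. Then: (1) $\mathfrak{K}\vDash\mathsf{MGrz}$ but $\mathfrak{K}\nvDash\mathsf{LKur}$; (2) $\mathfrak{H}\vDash\mathsf{LKur}$ but $\mathfrak{H}\nvDash\mathsf{MGrz}$; (3) $\mathsf{MGrz}$ and $\mathsf{LKur}$ are incomparable (neither contains the other).
   Context: $\mathsf{MS4}$ is the smallest set of formulas in the classical bimodal language $\mathcal{L}_{\Box\forall}$ containing all classical tautologies, the $\mathsf{S4}$ axioms for $\Box$, the $\mathsf{S5}$ axioms for $\forall$, and $\Box\forall p\to\forall\Box p$, closed under modus ponens, substitution, $\Box$- and $\forall$-necessitation; $\Diamond=\neg\Box\neg$, $\exists=\neg\forall\neg$. $\mathsf{MGrz}=\mathsf{MS4}+\Box(\Box(p\to\Box p)\to p)\to p$ and $\mathsf{LKur}=\mathsf{MS4}+\Box\forall\Diamond\Box p\to\Diamond\forall p$ (smallest extensions closed under the same rules containing the extra axiom). An $\mathsf{MS4}$-frame is $(Y,R,E)$ with $R$ a quasi-order, $E$ an equivalence relation, such that $xEy$ and $yRz$ imply there is $u$ with $xRu$ and $uEz$. Formulas are evaluated with valuations assigning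 subsets of $Y$ to letters, $\Box$ interpreted via $R$ and $\forall$ via $E$; a frame validates a logic if every formula of the logic is true at every point under every valuation. $R[x]=\{y: xRy\}$. *)

Inductive form : Type :=
| Var : nat -> form
| Bot : form
| Imp : form -> form -> form
| Box : form -> form
| All : form -> form.

Definition Neg (a : form) : form := Imp a Bot.
Definition Dia (a : form) : form := Neg (Box (Neg a)).
Definition Ex (a : form) : form := Neg (All (Neg a)).

(* Classical tautologies: formulas true under every boolean assignment to the
   "atoms" (propositional letters and modalized subformulas). *)
Fixpoint tv (v : form -> bool) (f : form) : bool :=
  match f with
  | Var _ => v f
  | Bot => false
  | Imp a b => implb (tv v a) (tv v b)
  | Box _ => v f
  | All _ => v f
  end.

Definition tautology (f : form) : Prop := forall v, tv v f = true.

Fixpoint subst (s : nat -> form) (f : form) : form :=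
  match f with
  | Var n => s n
  | Bot => Bot
  | Imp a b => Imp (subst s a) (subst s b)
  | Box a => Box (subst s a)
  | All a => All (subst s a)
  end.

Definition p : form := Var 0.
Definition q : form := Var 1.

Inductive derivable (Ax : form -> Prop) : form -> Prop :=
| d_taut : forall f, tautology f -> derivable Ax f
| d_boxK : derivable Ax (Imp (Box (Imp p q)) (Imp (Box p) (Box q)))
| d_boxT : derivable Ax (Imp (Box p) p)
| d_box4 : derivable Ax (Imp (Box p) (Box (Box p)))
| d_allK : derivable Ax (Imp (All (Imp p q)) (Imp (All p) (All q)))
| d_allT : derivable Ax (Imp (All p) p)
| d_all4 : derivable Ax (Imp (All p) (All (All p)))
| d_all5 : derivable Ax (Imp (Ex p) (All (Ex p)))
| d_mix : derivable Ax (Imp (Box (All p)) (All (Box p)))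
| d_ax : forall f, Ax f -> derivable Ax f
| d_mp : forall a b, derivable Ax (Imp a b) -> derivable Ax a -> derivable Ax b
| d_subst : forall s f, derivable Ax f -> derivable Ax (subst s f)
| d_necBox : forall f, derivable Ax f -> derivable Ax (Box f)
| d_necAll : forall f, derivable Ax f -> derivable Ax (All f).

Definition MS4 : form -> Prop := derivable (fun _ => False).

Definition grz_ax : form := Imp (Box (Imp (Box (Imp p (Box p))) p)) p.
Definition kur_ax : form := Imp (Box (All (Dia (Box p)))) (Dia (All p)).

Definition MGrz : form -> Prop := derivable (fun f => f = grz_ax).
Definition LKur : form -> Prop := derivable (fun f => f = kur_ax).

Fixpoint sat {Y : Type} (R E : Y -> Y -> Prop) (V : nat -> Y -> Prop)
  (f : form) (x : Y) : Prop :=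
  match f with
  | Var n => V n x
  | Bot => False
  | Imp a b => sat R E V a x -> sat R E V b x
  | Box a => forall y, R x y -> sat R E V a y
  | All a => forall y, E x y -> sat R E V a y
  end.

Definition is_MS4_frame {Y : Type} (R E : Y -> Y -> Prop) : Prop :=
  (forall x, R x x) /\ (forall x y z, R x y -> R y z -> R x z) /\
  (forall x, E x x) /\ (forall x y, E x y -> E y x) /\
  (forall x y z, E x y -> E y z -> E x z) /\
  (forall x y z, E x y -> R y z -> exists u, R x u /\ E u z).

Definition frame_validates {Y : Type} (R E : Y -> Y -> Prop) (L : form -> Prop) : Prop :=
  forall f, L f -> forall (V : nat -> Y -> Prop) (x : Y), sat R E V f x.

Inductive Kpt : Type := Ka | Kb.
Definition KR (x y : Kpt) : Prop :=
  match x, y with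
  | Ka, _ => True
  | Kb, Kb => True
  | Kb, Ka => False
  end.
Definition KE (x y : Kpt) : Prop := True.

Inductive Hpt : Type := Ha | Hb | Hc.
Definition HR (x y : Hpt) : Prop :=
  match x, y with
  | Ha, _ => True
  | Hb, Ha => False
  | Hb, _ => True
  | Hc, Ha => False
  | Hc, _ => True
  end.
Definition HE (x y : Hpt) : Prop :=
  match x, y with
  | Hc, Hc => True
  | Hc, _ => False
  | _, Hc => False
  | _, _ => True
  end.

(* Every logic derivable from MS4 plus extra axioms is validated by each
   MS4-frame validating those axioms, so a frame validating one logic but
   refuting an axiom of the other separates them.  K is a finite partial order
   and so validates Grz; taking p true exactly at b, the formula Box All Dia Box p
   holds at a while Dia All p fails there, since a lies in every E-class.  In H
   every point sees c, whose E-class is {c}, which forces Kur; but {b, c} is a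
   proper R-cluster, and with p true exactly at b the Grz axiom fails at c. *)

From Stdlib Require Import ClassicalEpsilon.

Section Soundness.
Context {Y : Type} (R E : Y -> Y -> Prop).

Lemma sat_subst (s : nat -> form) V f x :
  sat R E V (subst s f) x <-> sat R E (fun n y => sat R E V (s n) y) f x.
Proof.
  revert x; induction f; intros x; simpl; try tauto.
  - rewrite IHf1, IHf2; tauto.
  - split; intros H y Hy; apply IHf; auto.
  - split; intros H y Hy; apply IHf; auto.
Qed.

Lemma sat_tautology f V x : tautology f -> sat R E V f x.
Proof.
  intros Htaut.
  set (v := fun g => if excluded_middle_informative (sat R E V g x) then true else false).
  assert (tv_sat : forall g, tv v g = true <-> sat R E V g x).
  { induction g; simpl;
      try (unfold v; destruct excluded_middle_informative; split; auto; discriminate).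
    - split; [discriminate | contradiction].
    - rewrite <- IHg1, <- IHg2.
      destruct (tv v g1), (tv v g2); simpl; intuition congruence. }
  apply tv_sat, Htaut.
Qed.

Lemma derivable_sound (Ax : form -> Prop) :
  is_MS4_frame R E -> (forall f, Ax f -> forall V x, sat R E V f x) ->
  frame_validates R E (derivable Ax).
Proof.
  intros [Rrefl [Rtrans [Erefl [Esym [Etrans Rcomm]]]]] HAx f Hf.
  induction Hf; intros V x; simpl; auto.
  - apply sat_tautology; assumption.
  - intros H y Hxy z Hyz. apply H; eauto.
  - intros H y Hxy z Hyz. apply H; eauto.
  - intros H z Hxz Hex. apply H. intros y Hxy. apply Hex. eauto.
  - intros H z Hxz y Hzy.
    destruct (Rcomm _ _ _ Hxz Hzy) as [u [Hxu Huy]].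
    exact (H u Hxu y Huy).
  - apply (IHHf1 V x), IHHf2.
  - apply sat_subst, IHHf.
Qed.

Lemma validates_axiom_extension (a : form) :
  is_MS4_frame R E -> (forall V x, sat R E V a x) ->
  frame_validates R E (derivable (fun f => f = a)).
Proof.
  intros Hframe Ha. apply derivable_sound; [assumption |].
  intros f -> ; exact Ha.
Qed.

Lemma refutes_axiom_extension (a : form) V x :
  ~ sat R E V a x -> ~ frame_validates R E (derivable (fun f => f = a)).
Proof. intros Hrefute Hvalid. exact (Hrefute (Hvalid a (d_ax _ _ eq_refl) V x)). Qed.

Lemma not_incl_of_separating_frame (L1 L2 : form -> Prop) :
  frame_validates R E L1 -> ~ frame_validates R E L2 -> ~ (forall f, L2 f -> L1 f).
Proof. intros H1 H2 Hincl. apply H2. intros f Hf. apply H1, Hincl, Hf. Qed.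

End Soundness.

Lemma K_MS4_frame : is_MS4_frame KR KE.
Proof.
  unfold is_MS4_frame, KE; repeat split; auto.
  - intros []; simpl; auto.
  - intros [] [] []; simpl; auto.
  - intros x y z _ _. exists x. destruct x; simpl; auto.
Qed.

Lemma H_MS4_frame : is_MS4_frame HR HE.
Proof.
  unfold is_MS4_frame; repeat split.
  - intros []; simpl; auto.
  - intros [] [] []; simpl; auto.
  - intros []; simpl; auto.
  - intros [] []; simpl; auto.
  - intros [] [] []; simpl; auto.
  - intros [] [] [] Hxy Hyz; simpl in *; try contradiction;
      first [ exists Ha; simpl; auto; fail
            | exists Hb; simpl; auto; fail
            | exists Hc; simpl; auto ].
Qed.

Lemma K_sat_grz V x : sat KR KE V grz_ax x.
Proof.
  simpl. intros Hgrz.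
  assert (p_at_Kb : V 0 Kb).
  { apply (Hgrz Kb); [destruct x; simpl; auto |].
    intros y Hy Hp z Hz. destruct y, z; simpl in *; auto; contradiction. }
  destruct x; [| exact p_at_Kb].
  apply (Hgrz Ka); simpl; auto.
  intros y Hy Hp z Hz. destruct y, z; simpl in *; auto; contradiction.
Qed.

Lemma K_refutes_kur : ~ sat KR KE (fun _ y => y = Kb) kur_ax Ka.
Proof.
  simpl. intros Hkur. apply Hkur.
  - intros y _ z _ Hnot. apply (Hnot Kb); [destruct z; simpl; auto |].
    intros w Hw. destruct w; simpl in *; auto; contradiction.
  - intros y _ Hall. discriminate (Hall Ka I).
Qed.

Lemma H_sat_kur V x : sat HR HE V kur_ax x.
Proof.
  simpl. intros Hbox Hnot.
  assert (x_sees_c : HR x Hc) by (destruct x; simpl; auto).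
  apply (Hbox Hc x_sees_c Hc I). intros y Hcy Hp.
  assert (p_at_c : V 0 Hc) by (apply Hp; destruct y; simpl in *; auto).
  apply (Hnot Hc x_sees_c).
  intros z Hz. destruct z; simpl in Hz; [contradiction | contradiction | exact p_at_c].
Qed.

Lemma H_refutes_grz : ~ sat HR HE (fun _ y => y = Hb) grz_ax Hc.
Proof.
  simpl. intros Hgrz. discriminate Hgrz.
  intros y Hy Hbox. exfalso.
  destruct y; simpl in Hy; [contradiction | |]; discriminate (Hbox Hb I eq_refl Hc I).
Qed.

Theorem theorem5p4 :
  (is_MS4_frame KR KE /\ is_MS4_frame HR HE) /\
  (frame_validates KR KE MGrz /\ ~ frame_validates KR KE LKur) /\
  (frame_validates HR HE LKur /\ ~ frame_validates HR HE MGrz) /\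
  ((~ forall f, MGrz f -> LKur f) /\ (~ forall f, LKur f -> MGrz f)).
Proof.
  assert (K_MGrz : frame_validates KR KE MGrz)
    by exact (validates_axiom_extension _ _ _ K_MS4_frame K_sat_grz).
  assert (K_not_LKur : ~ frame_validates KR KE LKur)
    by exact (refutes_axiom_extension _ _ _ _ _ K_refutes_kur).
  assert (H_LKur : frame_validates HR HE LKur)
    by exact (validates_axiom_extension _ _ _ H_MS4_frame H_sat_kur).
  assert (H_not_MGrz : ~ frame_validates HR HE MGrz)
    by exact (refutes_axiom_extension _ _ _ _ _ H_refutes_grz).
  refine (conj (conj K_MS4_frame H_MS4_frame)
            (conj (conj K_MGrz K_not_LKur) (conj (conj H_LKur H_not_MGrz) (conj _ _)))).
  - exact (not_incl_of_separating_frame _ _ _ _ H_LKur H_not_MGrz).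
  - exact (not_incl_of_separating_frame _ _ _ _ K_MGrz K_not_LKur).
Qed.
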